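(* Let $\gamma>0$, $a,b,c,d>0$ and $\rho>1/2$. Let $(x_n)$ and $(y_n)$ be sequences of positive real numbers satisfying, for all $n$, $$x_{n+1}-x_n\le-\gamma a\,x_n^{1+\rho}y_n^{-\rho}+\gamma b\,x_n,\qquad y_{n+1}-y_n\le-\gamma c\,x_n^\rho y_n^{1-\rho}+\gamma d\sqrt{x_ny_n}.$$ Assume further that $$x_k\ge\Big(\frac dc\Big)^{\frac{2}{2\rho-1}}y_0\quad\text{and}\quad x_k\ge\Big(2\frac ba\Big)^{\frac1\rho}y_0\qquad\text{for all }k=0,\dots,n-1.$$ Then $x_n\le e^{-\gamma bn}x_0$ and $y_n\le y_0$. *)

From Stdlib Require Export Reals.
Open Scope R_scope.

(* Put r := x/y.  The damping terms factor as a x^(1+rho) y^(-rho) = a x r^rho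
   and c x^rho y^(1-rho) = c sqrt(xy) r^(rho-1/2), and each threshold assumption
   says exactly that the corresponding power of r dominates the growth rate:
   (x/y)^rho >= 2b/a and (x/y)^(rho-1/2) >= d/c.  Since y only decreases, the
   thresholds, stated against y_0, hold against every y_k; then y_(k+1) <= y_k
   and x_(k+1) <= (1 - gamma b) x_k <= exp(-gamma b) x_k at every step. *)

From Stdlib Require Import Reals Lra Lia.
Open Scope R_scope.

Lemma Rpower_ratio_shift x y p q r : 0 < x -> 0 < y ->
  Rpower x (p + r) * Rpower y (q - r) = Rpower x p * Rpower y q * Rpower (x / y) r.
Proof.
  intros hx hy; unfold Rpower, Rdiv.
  rewrite ln_mult, ln_Rinv, <- !exp_plus by auto with real.
  f_equal; ring.
Qed.

Lemma Rpower_inv_threshold K r x y : 0 < K -> 0 < r -> 0 < y ->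
  Rpower K (/ r) * y <= x -> K <= Rpower (x / y) r.
Proof.
  intros hK hr hy h.
  assert (hroot : Rpower K (/ r) <= x / y).
  { apply Rmult_le_reg_r with y; [exact hy |].
    unfold Rdiv; rewrite Rmult_assoc, Rinv_l, Rmult_1_r by lra; exact h. }
  rewrite <- (Rpower_1 K hK), <- (Rinv_l r) by lra.
  rewrite <- Rpower_mult.
  apply Rle_Rpower_l; [lra | split; [apply exp_pos | exact hroot]].
Qed.

Lemma damping_x_ge_twice_growth a b rho x y :
  0 < a -> 0 < b -> 0 < rho -> 0 < x -> 0 < y ->
  Rpower (2 * (b / a)) (1 / rho) * y <= x ->
  2 * b * x <= a * Rpower x (1 + rho) * Rpower y (- rho).
Proof.
  intros ha hb hrho hx hy h.
  replace (1 / rho) with (/ rho) in h by (field; lra).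
  assert (hK : 2 * (b / a) <= Rpower (x / y) rho).
  { apply Rpower_inv_threshold; auto.
    pose proof (Rdiv_lt_0_compat b a hb ha); lra. }
  replace (- rho) with (0 - rho) by ring.
  rewrite (Rmult_assoc a), Rpower_ratio_shift, Rpower_1, Rpower_O by lra.
  assert (hab : a * (2 * (b / a)) = 2 * b) by (field; lra).
  assert (a * x * (2 * (b / a)) <= a * x * Rpower (x / y) rho)
    by (apply Rmult_le_compat_l; nra).
  nra.
Qed.

Lemma damping_y_ge_growth c d rho x y :
  0 < c -> 0 < d -> 1 / 2 < rho -> 0 < x -> 0 < y ->
  Rpower (d / c) (2 / (2 * rho - 1)) * y <= x ->
  d * sqrt (x * y) <= c * Rpower x rho * Rpower y (1 - rho).
Proof.
  intros hc hd hrho hx hy h.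
  replace (2 / (2 * rho - 1)) with (/ (rho - / 2)) in h by (field; lra).
  assert (hK : d / c <= Rpower (x / y) (rho - / 2)).
  { apply Rpower_inv_threshold; auto; [apply Rdiv_lt_0_compat | lra]; lra. }
  replace (Rpower x rho) with (Rpower x (/ 2 + (rho - / 2))) by (f_equal; ring).
  replace (Rpower y (1 - rho)) with (Rpower y (/ 2 - (rho - / 2))) by (f_equal; field).
  rewrite (Rmult_assoc c), Rpower_ratio_shift, !Rpower_sqrt, <- sqrt_mult by lra.
  assert (hcd : c * (d / c) = d) by (field; lra).
  assert (hs : 0 < sqrt (x * y)) by (apply sqrt_lt_R0; nra).
  assert (c * sqrt (x * y) * (d / c) <= c * sqrt (x * y) * Rpower (x / y) (rho - / 2))
    by (apply Rmult_le_compat_l; nra).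
  nra.
Qed.

Lemma drift_step_le_exp g b A u u' : 0 < g -> 0 <= u ->
  2 * b * u <= A -> u' - u <= - g * A + g * b * u -> u' <= exp (- (g * b)) * u.
Proof.
  intros hg hu hA hstep.
  pose proof (exp_ineq1_le (- (g * b))).
  assert (g * (2 * b * u) <= g * A) by (apply Rmult_le_compat_l; lra).
  nra.
Qed.

Lemma le_first_upto (u : nat -> R) n :
  (forall k, (k < n)%nat -> u k <= u 0%nat -> u (S k) <= u k) ->
  forall k, (k <= n)%nat -> u k <= u 0%nat.
Proof.
  intros hstep k; induction k as [|k IH]; intros hk; [lra |].
  apply Rle_trans with (u k); [apply hstep |]; auto with arith.
Qed.

Lemma exp_decay_upto (u : nat -> R) r n :
  (forall k, (k < n)%nat -> u (S k) <= exp (- r) * u k) ->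
  forall k, (k <= n)%nat -> u k <= exp (- (r * INR k)) * u 0%nat.
Proof.
  intros hstep k; induction k as [|k IH]; intros hk.
  - rewrite Rmult_0_r, Ropp_0, exp_0; lra.
  - rewrite S_INR, Rmult_plus_distr_l, Rmult_1_r, Ropp_plus_distr, exp_plus.
    apply Rle_trans with (exp (- r) * u k); [apply hstep; lia |].
    rewrite (Rmult_comm (exp (- (r * INR k)))), Rmult_assoc.
    apply Rmult_le_compat_l; [apply Rlt_le, exp_pos | apply IH; lia].
Qed.

Theorem lemma3p3 (gamma a b c d rho : R) (x y : nat -> R) (n : nat)
  (hgamma : 0 < gamma) (ha : 0 < a) (hb : 0 < b) (hc : 0 < c) (hd : 0 < d)
  (hrho : 1/2 < rho)
  (hx : forall m, 0 < x m) (hy : forall m, 0 < y m)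
  (hrecx : forall m, x (S m) - x m <=
      - gamma * a * Rpower (x m) (1 + rho) * Rpower (y m) (- rho)
      + gamma * b * x m)
  (hrecy : forall m, y (S m) - y m <=
      - gamma * c * Rpower (x m) rho * Rpower (y m) (1 - rho)
      + gamma * d * sqrt (x m * y m))
  (hk1 : forall k, (k < n)%nat -> Rpower (d / c) (2 / (2 * rho - 1)) * y 0%nat <= x k)
  (hk2 : forall k, (k < n)%nat -> Rpower (2 * (b / a)) (1 / rho) * y 0%nat <= x k) :
  x n <= exp (- (gamma * b * INR n)) * x 0%nat /\ y n <= y 0%nat.
Proof.
  assert (hthreshold : forall K e k, y k <= y 0%nat ->
            Rpower K e * y 0%nat <= x k -> Rpower K e * y k <= x k).
  { intros K e k hyk h; eapply Rle_trans; [| exact h].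
    apply Rmult_le_compat_l; [apply Rlt_le, exp_pos | exact hyk]. }
  assert (hy_le : forall k, (k <= n)%nat -> y k <= y 0%nat).
  { apply (le_first_upto y n); intros k hk hyk.
    pose proof (damping_y_ge_growth c d rho (x k) (y k) hc hd hrho (hx k) (hy k)
                  (hthreshold _ _ k hyk (hk1 k hk))).
    assert (gamma * (d * sqrt (x k * y k)) <=
            gamma * (c * Rpower (x k) rho * Rpower (y k) (1 - rho)))
      by (apply Rmult_le_compat_l; lra).
    pose proof (hrecy k); lra. }
  split; [| apply hy_le; lia].
  apply (exp_decay_upto x (gamma * b) n); [| lia]; intros k hk.
  apply drift_step_le_exp with (A := a * Rpower (x k) (1 + rho) * Rpower (y k) (- rho));
    [exact hgamma | apply Rlt_le, hx | |].
  - apply damping_x_ge_twice_growth; try lra; auto.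
    apply hthreshold; [apply hy_le | apply hk2]; lia.
  - pose proof (hrecx k); lra.
Qed.
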